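(* Let $G=(\mathbb Z/a_1\mathbb Z)\times\dots\times(\mathbb Z/a_r\mathbb Z)$ be a finite Abelian group with $N=\exp(G)$ even, and let $f:G\to\mathbb Q$ be rational-valued. Let $2^m$ ($m\ge1$) be the highest power of $2$ dividing $N$ and $\ell=\phi(N/2^m)$. For each $k\ge 1$ let $u_k,v_k\in(\mathbb Z/N\mathbb Z)^\times$ satisfy $2^k\equiv u_k+v_k\pmod N$, chosen so that $u_1=v_1=1$ and $u_{k+\ell}=u_k$, $v_{k+\ell}=v_k$ for all $k\ge m$. For $x\in G$ set $$\widehat A_k=\widehat M_4(f;u_kx,v_kx,-u_kx),\qquad \widehat B_k=\widehat M_6(f;u_kx,v_kx,u_kx,v_kx,-u_{k+1}x).$$ Then for every $x\in\operatorname{supp}(\widehat f)$, $$\widehat f(x)^{2^m(2^\ell-1)}=\frac{\prod_{k=1}^{\ell+m-1}(\widehat B_k/\widehat A_{k+1})^{2^{\ell+m-1-k}}}{\prod_{k=1}^{m-1}(\widehat B_k/\widehat A_{k+1})^{2^{m-1-k}}},$$ all quantities $\widehat A_{k+1}$ appearing being nonzero.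
   Context: Elements of $G$ are tuples with componentwise addition modulo $a_k$; $\exp(G)=\min\{n>0: nx=0\ \forall x\in G\}$; $\phi$ is Euler's phi function; $(\mathbb Z/N\mathbb Z)^\times$ is the set of residues coprime to $N$. Define $\chi(x,y)=\exp\left(2\pi i\sum_{k=1}^r \frac{x[k]y[k]}{a_k}\right)$, $\widehat f(x)=\sum_{y\in G}f(y)\overline{\chi(x,y)}$, $\operatorname{supp}(\widehat f)=\{x:\widehat f(x)\ne0\}$, and the transformed autocorrelations $\widehat M_n(f;x_1,\dots,x_{n-1})=\widehat f(x_1)\cdots\widehat f(x_{n-1})\widehat f(-(x_1+\dots+x_{n-1}))$. *)

From mathcomp Require Import all_boot all_order all_algebra algC.
Set Implicit Arguments. Unset Strict Implicit. Unset Printing Implicit Defensive.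
Import Order.TTheory GRing.Theory Num.Theory.
Local Open Scope ring_scope.

(* the primitive root exp(2 pi i / n) in algC: n.-root (-1) = exp(i pi / n) *)
Definition zeta (n : nat) : algC := (n.-root (-1)) ^+ 2.

Lemma ord_pos n (i : 'I_n) : (0 < n)%N.
Proof. by apply: leq_ltn_trans (ltn_ord i). Qed.

Definition ord_mod n (i : 'I_n) (m : nat) : 'I_n := Ordinal (ltn_pmod m (ord_pos i)).

Definition grp (r : nat) (a : 'I_r -> nat) := {dffun forall k : 'I_r, 'I_(a k)}.

Definition gadd (r : nat) (a : 'I_r -> nat) (x y : grp a) : grp a :=
  [ffun k => ord_mod (x k) (x k + y k)].
Definition gneg (r : nat) (a : 'I_r -> nat) (x : grp a) : grp a :=
  [ffun k => ord_mod (x k) (a k - x k)].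
(* c x for an integer c >= 0 (residues mod N are represented by nats) *)
Definition gscale (r : nat) (a : 'I_r -> nat) (c : nat) (x : grp a) : grp a :=
  [ffun k => ord_mod (x k) (c * x k)].

Definition is_exponent r (a : 'I_r -> nat) (N : nat) : Prop :=
  [/\ (0 < N)%N,
      (forall (x : grp a) k, (N * x k) %% a k = 0)%N &
      (forall n, (0 < n)%N -> (forall (x : grp a) k, (n * x k) %% a k = 0)%N ->
         (N <= n)%N)].

Definition chi (r : nat) (a : 'I_r -> nat) (x y : grp a) : algC :=
  \prod_(k < r) zeta (a k) ^+ (x k * y k).

Definition fhat (r : nat) (a : 'I_r -> nat) (f : grp a -> rat) (x : grp a) : algC :=
  \sum_(y : grp a) ratr (f y) * (chi x y)^*.

(* transformed autocorrelation  M_n(f; x1, ..., x_(n-1)) with x1 = x, xs = [x2;...] *)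
Definition Mhat (r : nat) (a : 'I_r -> nat) (f : grp a -> rat) (x : grp a) (xs : seq (grp a)) : algC :=
  fhat f x * \prod_(y <- xs) fhat f y * fhat f (gneg (foldl (@gadd r a) x xs)).

From mathcomp Require Import all_boot all_order all_algebra algC algnum.
From mathcomp Require Import zify ring.
Set Implicit Arguments. Unset Strict Implicit.
Import Order.TTheory GRing.Theory Num.Theory.
Local Open Scope ring_scope.

(* With h(c) = fhat(c x), every factor of A_k and B_k is some h(c): since
   u_k + v_k + u_k + v_k = 2^(k+1) = u_(k+1) + v_(k+1) mod N, one gets
   B_k / A_(k+1) = g_k^2 / g_(k+1) where g_k = h(u_k) h(v_k).  For c coprime
   to N, h(c) is a Galois conjugate of fhat(x) in Q(zeta_N), hence nonzero.
   The weighted products of these ratios telescope to g_1^(2^(n-1)) / g_n, and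
   the quotient in the statement collapses because g_1 = fhat(x)^2 and
   g_(l+m) = g_m. *)

Lemma addn_mulpredn_modn N c : (0 < N)%N -> (c + c * N.-1 = 0 %[mod N])%N.
Proof. by move=> N_gt0; rewrite addnC -mulnSr prednK // modnMl mod0n. Qed.

Section Scaling.
Variables (r : nat) (a : 'I_r -> nat) (N : nat).
Hypothesis expN : forall (x : grp a) k, (N * x k %% a k = 0)%N.

Lemma gscale_coef_modn c (x : grp a) k : (c * x k = c %% N * x k %[mod a k])%N.
Proof.
by rewrite {1}(divn_eq c N) mulnDl -mulnA -modnDml -modnMmr expN muln0 mod0n.
Qed.

Lemma gscale_modn c d (x : grp a) : (c = d %[mod N])%N -> gscale c x = gscale d x.
Proof.
move=> cd; apply/ffunP => k; rewrite !ffunE; apply/val_inj => /=.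
by rewrite gscale_coef_modn cd -gscale_coef_modn.
Qed.

Lemma gscale1 (x : grp a) : gscale 1 x = x.
Proof.
by apply/ffunP => k; rewrite !ffunE; apply/val_inj; rewrite /= mul1n modn_small.
Qed.

Lemma gadd_gscale c d (x : grp a) : gadd (gscale c x) (gscale d x) = gscale (c + d) x.
Proof.
by apply/ffunP => k; rewrite !ffunE; apply/val_inj; rewrite /= modnDm mulnDl.
Qed.

Lemma gneg_gscale c d (x : grp a) :
  (c + d = 0 %[mod N])%N -> gneg (gscale c x) = gscale d x.
Proof.
move=> cd; apply/ffunP => k; rewrite !ffunE; apply/val_inj => /=.
have ak_gt0 : (0 < a k)%N by apply: leq_ltn_trans (ltn_ord (x k)).
apply/eqP; rewrite -(eqn_modDr (c * x k %% a k)) subnK; last by rewrite ltnW ?ltn_pmod.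
by rewrite modnn modnDmr -mulnDl addnC gscale_coef_modn cd mod0n mul0n mod0n.
Qed.

Lemma foldl_gadd_gscale c ds (x : grp a) :
  foldl (@gadd r a) (gscale c x) [seq gscale d x | d <- ds] = gscale (c + sumn ds) x.
Proof.
by elim: ds c => [|d ds IHds] c /=; rewrite ?addn0 // gadd_gscale IHds addnA.
Qed.

Lemma Mhat_gscale (f : grp a -> rat) c ds e (x : grp a) :
  (c + sumn ds + e = 0 %[mod N])%N ->
  Mhat f (gscale c x) [seq gscale d x | d <- ds] =
    fhat f (gscale c x) * \prod_(d <- ds) fhat f (gscale d x) * fhat f (gscale e x).
Proof. by move=> sum0; rewrite /Mhat foldl_gadd_gscale (gneg_gscale _ sum0) big_map. Qed.

End Scaling.

Lemma zeta_expn n : (0 < n)%N -> zeta n ^+ n = 1.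
Proof. by move=> n_gt0; rewrite /zeta -exprM mulnC exprM rootCK // sqrrN expr1n. Qed.

Section GaloisConjugates.
Variables (r : nat) (a : 'I_r -> nat) (N : nat).
Hypothesis a_gt0 : forall k, (0 < a k)%N.
Hypothesis expN : forall (x : grp a) k, (N * x k %% a k = 0)%N.

Lemma chi_gscale c (x y : grp a) : chi (gscale c x) y = chi x y ^+ c.
Proof.
rewrite /chi -prodrXl; apply: eq_bigr => k _; rewrite ffunE /=.
by rewrite exprM expr_mod ?zeta_expn // -exprM -mulnA mulnC exprM.
Qed.

Lemma chi_expN (x y : grp a) : chi x y ^+ N = 1.
Proof.
rewrite /chi -prodrXl; apply: big1 => k _.
rewrite -exprM -(expr_mod _ (zeta_expn (a_gt0 k))) mulnC mulnA -modnMml expN.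
by rewrite mul0n mod0n expr0.
Qed.

(* The automorphism of Q(zeta_N) sending zeta_N to zeta_N^c maps fhat(x) to fhat(c x). *)
Lemma fhat_gscale_neq0 (f : grp a -> rat) c (x : grp a) :
  coprime c N -> fhat f x != 0 -> fhat f (gscale c x) != 0.
Proof.
move=> cN fx_neq0; have [s s_zeta] := Qn_aut_exists cN.
suff <- : s (fhat f x) = fhat f (gscale c x) by rewrite fmorph_eq0.
rewrite /fhat rmorph_sum; apply: eq_bigr => y _.
rewrite rmorphM fmorph_rat chi_gscale; congr (_ * _).
by rewrite s_zeta -rmorphXn // chi_expN rmorph1.
Qed.

End GaloisConjugates.

Lemma prod_sqr_div_telescope (F : fieldType) (g : nat -> F) n :
  (forall k, (1 <= k <= n)%N -> g k != 0) -> (1 <= n)%N ->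
  \prod_(1 <= k < n) (g k ^+ 2 / g k.+1) ^+ (2 ^ (n - 1 - k)) = g 1 ^+ (2 ^ (n - 1)) / g n.
Proof.
elim: n => // n IHn g_neq0 _; have [-> | n_gt0] := posnP n.
  by rewrite big_geq // expr1 divff // g_neq0.
have g_neq0_le k : (1 <= k <= n)%N -> g k != 0.
  by move=> /andP [k_ge1 k_le]; rewrite g_neq0 // k_ge1 leqW.
rewrite big_nat_recr //= !subn1 /= subnn expr1.
rewrite (eq_big_nat _ _ (F2 := fun k => ((g k ^+ 2 / g k.+1) ^+ (2 ^ (n - 1 - k))) ^+ 2));
  last by move=> k /andP [k_ge1 k_lt]; rewrite -exprM -expnSr; congr (_ ^+ (2 ^ _)); lia.
have -> : (2 ^ n = 2 ^ (n - 1) * 2)%N by rewrite -expnSr subn1 prednK.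
rewrite prodrXl IHn // exprM.
have gn_neq0 : g n != 0 by apply: g_neq0_le; rewrite n_gt0 leqnn.
have gn1_neq0 : g n.+1 != 0 by apply: g_neq0; rewrite leqnn.
by field; rewrite gn1_neq0 gn_neq0.
Qed.

Lemma sqr_exp2_div_div (F : fieldType) (y z : F) m l : y != 0 -> z != 0 -> (0 < m)%N ->
  ((y ^+ 2) ^+ (2 ^ (l + m - 1)) / z) / ((y ^+ 2) ^+ (2 ^ (m - 1)) / z) =
  y ^+ (2 ^ m * (2 ^ l - 1)).
Proof.
move=> y_neq0 z_neq0 m_gt0.
have exp2_pred n : (0 < n)%N -> (2 * 2 ^ (n - 1) = 2 ^ n)%N.
  by move=> n_gt0; rewrite -expnS subn1 prednK.
rewrite -!exprM !exp2_pred ?(ltn_addl l m_gt0) // mulnBr muln1 -expnD addnC.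
rewrite expfB_cond; last by rewrite (negbTE y_neq0) leq_pexp2l ?leq_addr.
by field; rewrite expf_neq0 // z_neq0.
Qed.

Section DoublingIdentity.
Variables (r : nat) (a : 'I_r -> nat) (f : grp a -> rat) (N : nat).
Variables (u v : nat -> nat) (x : grp a).
Hypothesis a_gt0 : forall k, (0 < a k)%N.
Hypothesis expN : forall (y : grp a) k, (N * y k %% a k = 0)%N.
Hypothesis N_gt0 : (0 < N)%N.
Hypothesis uv_split : forall k, (1 <= k)%N ->
  coprime (u k) N /\ coprime (v k) N /\ (2 ^ k = u k + v k %[mod N])%N.
Hypothesis fx_neq0 : fhat f x != 0.

Local Notation h c := (fhat f (gscale c x)).
Local Notation g k := (h (u k) * h (v k)).
Local Notation A k := (Mhat f (gscale (u k) x) [:: gscale (v k) x; gneg (gscale (u k) x)]).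
Local Notation B k := (Mhat f (gscale (u k) x)
  [:: gscale (v k) x; gscale (u k) x; gscale (v k) x; gneg (gscale (u k.+1) x)]).

Lemma uv_terms_neq0 k : (1 <= k)%N ->
  [/\ h (u k) != 0, h (v k) != 0, h (u k * N.-1) != 0 & h (v k * N.-1) != 0].
Proof.
move=> /uv_split [uN [vN _]].
by split; apply: fhat_gscale_neq0; rewrite // coprimeMl ?uN ?vN coprimePn.
Qed.

Lemma g_neq0 k : (1 <= k)%N -> g k != 0.
Proof. by move=> /uv_terms_neq0 [hu hv _ _]; rewrite mulf_neq0. Qed.

Lemma Mhat4_factor k : A k = g k * (h (u k * N.-1) * h (v k * N.-1)).
Proof.
have sum0 : (u k + sumn [:: v k; u k * N.-1] + v k * N.-1 = 0 %[mod N])%N.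
  have -> : (u k + sumn [:: v k; u k * N.-1] + v k * N.-1
             = u k + v k + (u k + v k) * N.-1)%N by rewrite /=; lia.
  exact: addn_mulpredn_modn.
rewrite (gneg_gscale expN _ (addn_mulpredn_modn (u k) N_gt0)) (Mhat_gscale expN f x sum0).
by rewrite !big_cons big_nil; ring.
Qed.

Lemma Mhat6_factor k : (1 <= k)%N ->
  B k = g k ^+ 2 * (h (u k.+1 * N.-1) * h (v k.+1 * N.-1)).
Proof.
move=> k_ge1; have [_ [_ split_k]] := uv_split k_ge1.
have [_ [_ split_k1]] := uv_split (ltn0Sn k).
have double : ((u k + v k) * 2 = u k.+1 + v k.+1 %[mod N])%N.
  by rewrite -modnMml -split_k modnMml -expnSr split_k1.
have sum0 : (u k + sumn [:: v k; u k; v k; u k.+1 * N.-1] + v k.+1 * N.-1 = 0 %[mod N])%N.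
  have -> : (u k + sumn [:: v k; u k; v k; u k.+1 * N.-1] + v k.+1 * N.-1
             = (u k + v k) * 2 + (u k.+1 + v k.+1) * N.-1)%N by rewrite /=; lia.
  by rewrite -modnDml double modnDml addn_mulpredn_modn.
rewrite (gneg_gscale expN _ (addn_mulpredn_modn (u k.+1) N_gt0)) (Mhat_gscale expN f x sum0).
by rewrite !big_cons big_nil; ring.
Qed.

Lemma Mhat4_neq0 k : (1 <= k)%N -> A k != 0.
Proof.
move=> k_ge1; have [_ _ huN hvN] := uv_terms_neq0 k_ge1.
by rewrite Mhat4_factor; apply: mulf_neq0; [exact: g_neq0 | exact: mulf_neq0].
Qed.

Lemma Mhat6_div_Mhat4 k : (1 <= k)%N -> B k / A k.+1 = g k ^+ 2 / g k.+1.
Proof.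
move=> k_ge1; have [hu hv huN hvN] := uv_terms_neq0 (ltn0Sn k).
rewrite Mhat6_factor // Mhat4_factor.
by field; rewrite hu hv huN hvN.
Qed.

Lemma prod_Mhat6_div_Mhat4 n : (1 <= n)%N ->
  \prod_(1 <= k < n) (B k / A k.+1) ^+ (2 ^ (n - 1 - k)) = g 1 ^+ (2 ^ (n - 1)) / g n.
Proof.
move=> n_ge1; rewrite -(@prod_sqr_div_telescope _ (fun k => g k)) //; last first.
  by move=> k /andP [k_ge1 _]; apply: g_neq0.
by apply: eq_big_nat => k /andP [k_ge1 _]; rewrite Mhat6_div_Mhat4.
Qed.

End DoublingIdentity.

Theorem theorem5 (r : nat) (a : 'I_r -> nat) (f : grp a -> rat) (N : nat)
    (u v : nat -> nat) :
  (forall k, 0 < a k)%N ->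
  is_exponent a N ->
  ~~ odd N ->
  let m := logn 2 N in
  let l := totient (N %/ 2 ^ m) in
  (forall k, 1 <= k -> coprime (u k) N /\ coprime (v k) N /\
                       2 ^ k = u k + v k %[mod N])%N ->
  (u 1 = 1 %[mod N])%N -> (v 1 = 1 %[mod N])%N ->
  (forall k, m <= k -> u (k + l) = u k %[mod N] /\ v (k + l) = v k %[mod N])%N ->
  forall x : grp a, fhat f x != 0 ->
  let A k := Mhat f (gscale (u k) x) [:: gscale (v k) x; gneg (gscale (u k) x)] in
  let B k := Mhat f (gscale (u k) x)
               [:: gscale (v k) x; gscale (u k) x; gscale (v k) x;
                   gneg (gscale (u k.+1) x)] in
  (forall k, (1 <= k < l + m)%N -> A k.+1 != 0) /\
  fhat f x ^+ (2 ^ m * (2 ^ l - 1)) =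
    (\prod_(1 <= k < l + m) (B k / A k.+1) ^+ (2 ^ (l + m - 1 - k)))
    / (\prod_(1 <= k < m) (B k / A k.+1) ^+ (2 ^ (m - 1 - k))).
Proof.
move=> a_gt0 [N_gt0 expN _] N_even m l uv_split u1 v1 uv_periodic x fx_neq0 A B.
split=> [k _ | ]; first exact: (Mhat4_neq0 a_gt0 expN N_gt0 uv_split fx_neq0).
have m_gt0 : (0 < m)%N by rewrite logn_gt0 mem_primes N_gt0 dvdn2 N_even.
have telescope := prod_Mhat6_div_Mhat4 a_gt0 expN N_gt0 uv_split fx_neq0.
rewrite telescope ?(ltn_addl l m_gt0) // telescope //.
have [u_period v_period] := uv_periodic m (leqnn m).
rewrite addnC in u_period v_period.
rewrite (gscale_modn expN _ u_period) (gscale_modn expN _ v_period).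
rewrite (gscale_modn expN _ u1) (gscale_modn expN _ v1) gscale1 -expr2.
by rewrite sqr_exp2_div_div // (g_neq0 a_gt0 expN N_gt0 uv_split fx_neq0).
Qed.
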